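(* Let $\phi$ (with variables $A_1,\dots,A_n$), $\psi$ (with variables $B_1,\dots,B_m$) and $\chi$ (with variables $C_1,\dots,C_l$) be transformations between functors $\mathbb C^{\alpha}\to\mathbb C$ (for appropriate sign lists), each dinatural in all its variables. Then for every $i\in m$ and $j\in l$, $$(\phi\ast_i\psi)\ast_j\chi=\phi\ast_{j-1+i}(\psi\ast_j\chi),$$ i.e. both sides have the same domain functor, codomain functor and type (both having variables $C_1,\dots,C_{j-1},B_1,\dots,B_{i-1},A_1,\dots,A_n,B_{i+1},\dots,B_m,C_{j+1},\dots,C_l$) and the same components.
   Context: Notation: $k$ also denotes $\{1,\dots,k\}$; $\mathbb C^\alpha=\mathbb C^{\alpha_1}\times\cdots$ with $\mathbb C^+=\mathbb C$, $\mathbb C^-=\mathbb C^{op}$; for $\mathbf A=(A_1,\dots,A_n)$, $\sigma\colon k\to n$, $\mathbf A\sigma=(A_{\sigma1},\dots,A_{\sigma k})$; a morphism in a contravariant argument is read in $\mathbb C^{op}$. A transformation $\phi\colon F\to G$ ($F\colon\mathbb C^\alpha\to\mathbb C$, $G\colon\mathbb C^\beta\to\mathbb C$) of type $|\alpha|\xrightarrow{\sigma}n\xleftarrow{\tau}|\beta|$ is a family $\phi_{\mathbf A}\colon F(\mathbf A\sigma)\to G(\mathbf A\tau)$, $\mathbf A\in\mathrm{Ob}(\mathbb C)^n$. $\mathbf A[X,Y/i]\sigma$ is the tuple whose $j$-th entry is $X$ if $\sigma j=i,\alpha_j=-$, $Y$ if $\sigma j=i,\alpha_j=+$, $A_{\sigma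 j}$ (or $1_{A_{\sigma j}}$ for morphisms) otherwise; $\mathbf A[X/i]=\mathbf A[X,X/i]$. $\phi$ is dinatural in its $i$-th variable if for all $A_j$ ($j\ne i$) and $f\colon A\to B$: $G(\mathbf A[A,f/i]\tau)\circ\phi_{\mathbf A[A/i]}\circ F(\mathbf A[f,A/i]\sigma)=G(\mathbf A[f,B/i]\tau)\circ\phi_{\mathbf A[B/i]}\circ F(\mathbf A[B,f/i]\sigma)$. Horizontal composition: let $F\colon\mathbb C^\alpha\to\mathbb C$, $G\colon\mathbb C^\beta\to\mathbb C$, $H\colon\mathbb C^\gamma\to\mathbb C$, $K\colon\mathbb C^\delta\to\mathbb C$, $\phi\colon F\to G$ of type $|\alpha|\xrightarrow{\sigma}n\xleftarrow{\tau}|\beta|$ with variables $\mathbf A=(A_1,\dots,A_n)$, and $\psi\colon H\to K$ of type $|\gamma|\xrightarrow{\eta}m\xleftarrow{\theta}|\delta|$ with variables $\mathbf B=(B_1,\dots,B_m)$, dinatural in its $i$-th variable. $\phi\ast_i\psi$ has variables $(B_1,\dots,B_{i-1},A_1,\dots,A_n,B_{i+1},\dots,B_m)$. Its domain functor is obtained from $H$ by substituting into each argument position $u$ with $\eta u=i$ the functor $F$ if $\gamma_u=+$ and $G^{op}$ if $\gamma_u=-$ (other positions unchanged); its codomain from $K$ by substituting into each position $v$ with $\theta v=i$ the functor $G$ if $\delta_v=+$ and $F^{op}$ if $\delta_v=-$. In its type, an argument coming from the $j$-th argument of a copy of $F$ has variable $A_{\sigma j}$, from a copy of $G$ variable $A_{\tau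 j}$, and unchanged positions $u$ of $H$ (resp. $v$ of $K$) variable $B_{\eta u}$ (resp. $B_{\theta v}$). Its component at $\mathbf B[\mathbf A/i]$ is $K(\mathbf B[F(\mathbf A\sigma),\phi_{\mathbf A}/i]\theta)\circ\psi_{\mathbf B[F(\mathbf A\sigma)/i]}\circ H(\mathbf B[\phi_{\mathbf A},F(\mathbf A\sigma)/i]\eta)$. (By the result that $\phi\ast_i\psi$ is dinatural in every variable in which $\phi$ resp. $\psi$ is, both sides of the claim are defined.) *)

From mathcomp Require Import all_boot all_order.
From mathcomp Require Import zify.
From Stdlib Require Import FunctionalExtensionality.

Unset Printing Implicit Defensive.

Record category := Category {
  Ob : Type;
  Hom : Ob -> Ob -> Type;
  idm : forall a, Hom a a;
  comp : forall {a b c}, Hom b c -> Hom a b -> Hom a c;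
  comp_assoc : forall a b c d (h : Hom c d) (g : Hom b c) (f : Hom a b),
      comp h (comp g f) = comp (comp h g) f;
  comp_id_l : forall a b (f : Hom a b), comp (idm b) f = f;
  comp_id_r : forall a b (f : Hom a b), comp f (idm a) = f }.

Arguments Ob : clear implicits.
Arguments Hom {C} : rename.
Arguments idm {C} a : rename.
Arguments comp {C a b c} : rename.

Section MixedVariance.
Variable C : category.
Local Notation Ob := (Ob C).

(* A morphism of C^b (b = true : C, b = false : C^op) from x to y. *)
Definition vhom (b : bool) (x y : Ob) : Type := if b then Hom x y else Hom y x.

Definition vid (b : bool) (x : Ob) : vhom b x x :=
  match b return vhom b x x with true => idm x | false => idm x end.

(* composite "g after f" in C^b *)
Definition vcomp (b : bool) {x y z : Ob} : vhom b x y -> vhom b y z -> vhom b x z :=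
  match b return vhom b x y -> vhom b y z -> vhom b x z with
  | true => fun f g => comp g f
  | false => fun f g => comp f g
  end.

Definition vflip {b : bool} {x y : Ob} : vhom (~~ b) x y -> vhom b y x :=
  match b return vhom (~~ b) x y -> vhom b y x with
  | true => fun f => f | false => fun f => f end.

Definition vcast {b b' : bool} {x y : Ob} (e : b = b') (f : vhom b x y) : vhom b' x y :=
  match e in _ = b0 return vhom b0 x y with erefl => f end.

Definition castHom {x x' y y' : Ob} (e1 : x = x') (e2 : y = y') (f : Hom x y) : Hom x' y' :=
  match e1 in _ = x0 return Hom x0 y' with
  | erefl => match e2 in _ = y0 return Hom x y0 with erefl => f end end.

(* Functors C^alpha -> C.  [ar_n] = |alpha|, [ar u] = alpha_u          *)
(* (true = +, false = -); argument tuples are 'I_|alpha| -> Ob.        *)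

Record mfun := MFun {
  ar_n : nat;
  ar : 'I_ar_n -> bool;
  fo : ('I_ar_n -> Ob) -> Ob;
  fm : forall {X Y : 'I_ar_n -> Ob},
         (forall u, vhom (ar u) (X u) (Y u)) -> Hom (fo X) (fo Y) }.

Arguments ar_n : clear implicits.
Arguments ar : clear implicits.
Arguments fo : clear implicits.
Arguments fm F {X Y} : rename.

Definition is_functor (F : mfun) : Prop :=
  (forall X, fm F (fun u => vid (ar F u) (X u)) = idm (fo F X)) /\
  (forall (X Y Z : 'I_(ar_n F) -> Ob)
          (f : forall u, vhom (ar F u) (X u) (Y u))
          (g : forall u, vhom (ar F u) (Y u) (Z u)),
      fm F (fun u => vcomp (ar F u) (f u) (g u)) = comp (fm F g) (fm F f)).

(* Transformations phi : F -> G of type |alpha| -sigma-> n <-tau- |beta| *)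
Record trans := Trans {
  tdom : mfun;
  tcod : mfun;
  tn : nat;
  tsig : 'I_(ar_n tdom) -> 'I_tn;
  ttau : 'I_(ar_n tcod) -> 'I_tn;
  tcomp : forall A : 'I_tn -> Ob,
      Hom (fo tdom (fun u => A (tsig u))) (fo tcod (fun u => A (ttau u))) }.

Arguments tdom : clear implicits.
Arguments tcod : clear implicits.
Arguments tn : clear implicits.
Arguments tsig : clear implicits.
Arguments ttau : clear implicits.
Arguments tcomp : clear implicits.

(* [pc X Y] : the object put in a slot of variance b (X for -, Y for +) *)
Definition pc (X Y : Ob) : bool -> Ob := fun s => if s then Y else X.

(* A[p/i]sigma : the j-th entry is p(alpha_j) if sigma j = i, else A_{sigma j} *)
Definition obs {k n} (al : 'I_k -> bool) (sg : 'I_k -> 'I_n) (A : 'I_n -> Ob)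
    (i : 'I_n) (p : bool -> Ob) : 'I_k -> Ob :=
  fun j => if sg j == i then p (al j) else A (sg j).

(* the morphism tuple which is [fneg] in the contravariant slots with
   variable i, [fpos] in the covariant slots with variable i, and identities
   elsewhere; e.g. A[f,a/i]sigma = mtup (pc b a) (fun _ => a) f (idm a). *)
Definition mtup {k n} (al : 'I_k -> bool) (sg : 'I_k -> 'I_n) (A : 'I_n -> Ob)
    (i : 'I_n) (p1 p2 : bool -> Ob) (fneg : Hom (p2 false) (p1 false))
    (fpos : Hom (p1 true) (p2 true)) :
    forall j, vhom (al j) (obs al sg A i p1 j) (obs al sg A i p2 j) :=
  fun j =>
  match sg j == i as c return
        vhom (al j) (if c then p1 (al j) else A (sg j))
                    (if c then p2 (al j) else A (sg j)) with
  | true => match al j as b return vhom b (p1 b) (p2 b) with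
            | true => fpos | false => fneg end
  | false => vid (al j) (A (sg j))
  end.


Definition subst1 {n} (A : 'I_n -> Ob) (i : 'I_n) (a : Ob) : 'I_n -> Ob :=
  fun v => if v == i then a else A v.

Definition dinatural_in (phi : trans) (i : 'I_(tn phi)) : Prop :=
  forall (A : 'I_(tn phi) -> Ob) (a b : Ob) (f : Hom a b),
    comp (fm (tcod phi) (mtup (ar (tcod phi)) (ttau phi) A i (fun _ => a) (pc a b) (idm a) f))
      (comp (tcomp phi (subst1 A i a))
            (fm (tdom phi) (mtup (ar (tdom phi)) (tsig phi) A i (pc b a) (fun _ => a) f (idm a))))
    =
    comp (fm (tcod phi) (mtup (ar (tcod phi)) (ttau phi) A i (fun _ => b) (pc a b) f (idm b)))
      (comp (tcomp phi (subst1 A i b))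
            (fm (tdom phi) (mtup (ar (tdom phi)) (tsig phi) A i (pc b a) (fun _ => b) (idm b) f))).


Definition dinatural (phi : trans) : Prop := forall i, dinatural_in phi i.

(* At a position u with P u: Fp if alpha_u = +, Fn^op if alpha_u = -;  *)
(* other positions unchanged.  The resulting argument list is the      *)
(* concatenation (in order) of the blocks, via tagnat.                 *)

Section Subst.
Variables (H : mfun) (P : 'I_(ar_n H) -> bool) (Fp Fn : mfun).

Definition blk_k (c g : bool) : nat :=
  if c then (if g then ar_n Fp else ar_n Fn) else 1.

Definition blk_ar (c g : bool) : 'I_(blk_k c g) -> bool :=
  match c as c0, g as g0 return 'I_(blk_k c0 g0) -> bool with
  | true, true => ar Fp
  | true, false => fun j => ~~ ar Fn j
  | false, g0 => fun _ => g0
  end.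

Definition blk_obj (c g : bool) : ('I_(blk_k c g) -> Ob) -> Ob :=
  match c as c0, g as g0 return ('I_(blk_k c0 g0) -> Ob) -> Ob with
  | true, true => fo Fp
  | true, false => fo Fn
  | false, _ => fun Xb => Xb ord0
  end.

Definition blk_mor (c g : bool) :
  forall {Xb Yb : 'I_(blk_k c g) -> Ob},
    (forall j, vhom (blk_ar c g j) (Xb j) (Yb j)) ->
    vhom g (blk_obj c g Xb) (blk_obj c g Yb) :=
  match c as c0, g as g0 return
    forall Xb Yb : 'I_(blk_k c0 g0) -> Ob,
      (forall j, vhom (blk_ar c0 g0 j) (Xb j) (Yb j)) ->
      vhom g0 (blk_obj c0 g0 Xb) (blk_obj c0 g0 Yb) with
  | true, true => fun Xb Yb fb => fm Fp fb
  | true, false => fun Xb Yb fb => fm Fn (fun j => vflip (fb j))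
  | false, g0 => fun Xb Yb fb => fb ord0
  end.

Definition pk (u : 'I_(ar_n H)) : nat := blk_k (P u) (ar H u).

Local Notation sk := (\sum_(u < ar_n H) pk u)%N.

Definition sar (t : 'I_sk) : bool :=
  let s := @tagnat.sig _ pk t in blk_ar (P (tag s)) (ar H (tag s)) (tagged s).

Definition sfo (X : 'I_sk -> Ob) : Ob :=
  fo H (fun u => blk_obj (P u) (ar H u) (fun j => X (@tagnat.Rank _ pk u j))).

Lemma sar_Rank u (j : 'I_(pk u)) :
  sar (@tagnat.Rank _ pk u j) = blk_ar (P u) (ar H u) j.
Proof. by rewrite /sar /tagnat.Rank tagnat.rankK. Qed.

Definition sfm (X Y : 'I_sk -> Ob) (fs : forall t, vhom (sar t) (X t) (Y t)) :
    Hom (sfo X) (sfo Y) :=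
  fm H (fun u => blk_mor (P u) (ar H u) (Xb := fun j => X (@tagnat.Rank _ pk u j))
                       (Yb := fun j => Y (@tagnat.Rank _ pk u j))
                       (fun j => vcast (sar_Rank u j) (fs (@tagnat.Rank _ pk u j)))).

Definition fsubst : mfun := @MFun sk sar sfo sfm.

Variables (N : nat) (mp : 'I_(ar_n Fp) -> 'I_N) (mn : 'I_(ar_n Fn) -> 'I_N)
          (mo : forall u, P u = false -> 'I_N).

Definition blk_map (c g : bool) (mo' : c = false -> 'I_N) : 'I_(blk_k c g) -> 'I_N :=
  match c as c0 return (c0 = false -> 'I_N) -> 'I_(blk_k c0 g) -> 'I_N with
  | true => fun _ => match g as g0 return 'I_(blk_k true g0) -> 'I_N with
                     | true => mp | false => mn end
  | false => fun mo' _ => mo' erefl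
  end mo'.

Definition smap (t : 'I_sk) : 'I_N :=
  let s := @tagnat.sig _ pk t in blk_map (P (tag s)) (ar H (tag s)) (mo (tag s)) (tagged s).

Lemma sfo_smap (V : 'I_N -> Ob) (Z : 'I_(ar_n H) -> Ob) :
  (forall u, blk_obj (P u) (ar H u) (fun j => V (blk_map (P u) (ar H u) (mo u) j)) = Z u) ->
  sfo (fun t => V (smap t)) = fo H Z.
Proof.
move=> hZ; rewrite /sfo; congr (fo H _); apply: functional_extensionality => u.
rewrite -hZ; congr (blk_obj _ _ _); apply: functional_extensionality => j.
by rewrite /smap /tagnat.Rank tagnat.rankK.
Qed.

End Subst.

(* Variables of phi *_i psi : (B_1..B_{i-1}, A_1..A_n, B_{i+1}..B_m),  *)
(* 0-based: A_a is variable i + a, B_b (b <> i) is b if b < i and      *)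
(* b - 1 + n if b > i.                                                 *)

Lemma inA_lt {m n} (i : 'I_m) (a : 'I_n) : (i + a < m.-1 + n)%N.
Proof. case: i a => [i hi] [a ha] /=; lia. Qed.

Definition inA {m n} (i : 'I_m) (a : 'I_n) : 'I_(m.-1 + n) := Ordinal (inA_lt i a).

Lemma newB_lt {m} n {i b : 'I_m} : b != i ->
  ((if (b < i)%N then val b else (val b).-1 + n) < m.-1 + n)%N.
Proof. case: i b => [i hi] [b hb] /= /eqP hne.
have hne' : b <> i by move=> e; apply: hne; exact: val_inj.
case: ifP => hbi; lia. Qed.

Definition newB {m} n {i b : 'I_m} (h : b != i) : 'I_(m.-1 + n) :=
  Ordinal (newB_lt n h).

Section HComp.
Variables (phi psi : trans) (i : 'I_(tn psi)).

Local Notation n := (tn phi).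
Local Notation m := (tn psi).
Local Notation F := (tdom phi).
Local Notation G := (tcod phi).
Local Notation Hf := (tdom psi).
Local Notation K := (tcod psi).

Definition hdom : mfun := fsubst Hf (fun u => tsig psi u == i) F G.
Definition hcod : mfun := fsubst K (fun v => ttau psi v == i) G F.

Definition hsig : 'I_(ar_n hdom) -> 'I_(m.-1 + n) :=
  smap Hf (fun u => tsig psi u == i) F G (m.-1 + n) (fun j => inA i (tsig phi j)) (fun j => inA i (ttau phi j))
       (fun u (h : (tsig psi u == i) = false) => newB n (negbT h)).

Definition htau : 'I_(ar_n hcod) -> 'I_(m.-1 + n) :=
  smap K (fun v => ttau psi v == i) G F (m.-1 + n) (fun j => inA i (ttau phi j)) (fun j => inA i (tsig phi j))
       (fun v (h : (ttau psi v == i) = false) => newB n (negbT h)).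

Section Comp.
Variable V : 'I_(m.-1 + n) -> Ob.

Definition hA : 'I_n -> Ob := fun a => V (inA i a).
Definition hFv : Ob := fo F (fun j => hA (tsig phi j)).
Definition hGv : Ob := fo G (fun j => hA (ttau phi j)).

(* the entries B_b, b <> i, of the tuple B[F(A sigma)/i] *)
Definition hO (b : 'I_m) : Ob :=
  match b == i as c return (b == i) = c -> Ob with
  | true => fun _ => hFv
  | false => fun h => V (newB n (negbT h))
  end erefl.

(* K(B[F(A sigma),phi_A/i]theta) o psi_{B[F(A sigma)/i]} o H(B[phi_A,F(A sigma)/i]eta) *)
Definition hraw :
  Hom (fo Hf (obs (ar Hf) (tsig psi) hO i (pc hGv hFv)))
      (fo K (obs (ar K) (ttau psi) hO i (pc hFv hGv))) :=
  comp (fm K (mtup (ar K) (ttau psi) hO i (fun _ => hFv) (pc hFv hGv)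
                 (idm hFv) (tcomp phi hA)))
   (comp (tcomp psi (subst1 hO i hFv))
         (fm Hf (mtup (ar Hf) (tsig psi) hO i (pc hGv hFv) (fun _ => hFv)
                   (tcomp phi hA) (idm hFv)))).

Lemma hdom_eq : fo hdom (fun t => V (hsig t)) =
                fo Hf (obs (ar Hf) (tsig psi) hO i (pc hGv hFv)).
Proof.
apply: sfo_smap => u; rewrite /obs /hO.
move: (@newB m n i (tsig psi u)).
case: (tsig psi u == i) => /= nb; last by [].
by case: (ar Hf u).
Qed.

Lemma hcod_eq : fo hcod (fun t => V (htau t)) =
                fo K (obs (ar K) (ttau psi) hO i (pc hFv hGv)).
Proof.
apply: sfo_smap => u; rewrite /obs /hO.
move: (@newB m n i (ttau psi u)).
case: (ttau psi u == i) => /= nb; last by [].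
by case: (ar K u).
Qed.

Definition hcomp_comp : Hom (fo hdom (fun t => V (hsig t)))
                            (fo hcod (fun t => V (htau t))) :=
  castHom (esym hdom_eq) (esym hcod_eq) hraw.

End Comp.

Definition hcomp : trans := @Trans hdom hcod (m.-1 + n) hsig htau hcomp_comp.

End HComp.

End MixedVariance.

From mathcomp Require Import all_boot all_order.
From mathcomp Require Import zify.
From Stdlib Require Import FunctionalExtensionality Eqdep.

(* Both sides are records with dependently typed fields, so they are compared
   field by field (trans_ext) and morphisms are compared heterogeneously: a
   morphism is packed with its endpoints (hpack), and equal packed morphisms
   have equal endpoints and are equal after transport.
   1. Functors.  The domain of either side is obtained from the domain of chi
      by substituting, at its j-slots, functors into which the functors of
      phi were substituted at their i-slots, resp. by substituting the
      functors of phi into the (j+i)-slots of the domain of psi *_j chi.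
      Substitution is associative (subst_assoc); the arguments of a nested
      substitution are nested tagnat ranks, flattened by [Rank_Rank].
   2. Types.  The corresponding arguments of both sides are sent to the same
      variable (hmap_assoc); same for codomains.
   3. Components.  Both components are chi at its j-th variable pre- and
      postcomposed with the same morphisms built from phi and psi
      ([dinat_form]): on the left by the dinaturality of chi in j
      (dinat_form_slide), on the right by the functoriality of the domain and
      codomain of chi (dinat_form_merge). *)

(* Morphisms packed with their endpoints, to compare morphisms whose types are
   only propositionally equal. *)
Section Packed.
Variable C : category.

Definition hpack {x y : Ob C} (f : Hom x y) : {p : Ob C * Ob C & Hom p.1 p.2} :=
  existT (fun p => Hom p.1 p.2) (x, y) f.

Definition vpack {b : bool} {x y : Ob C} : vhom C b x y -> {p : Ob C * Ob C & Hom p.1 p.2} :=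
  match b return vhom C b x y -> _ with
  | true => fun f => hpack f | false => fun f => hpack f end.

Lemma hpack_ends {x y x' y' : Ob C} {f : Hom x y} {g : Hom x' y'} :
  hpack f = hpack g -> x = x' /\ y = y'.
Proof. by move=> /(congr1 (@projT1 _ _)) /= [] -> ->. Qed.

Lemma hpack_inj {x y : Ob C} (f g : Hom x y) : hpack f = hpack g -> f = g.
Proof. exact: inj_pair2 (fun p : Ob C * Ob C => Hom p.1 p.2) (x, y) f g. Qed.

Lemma hpack_castHom {x x' y y' : Ob C} (e1 : x = x') (e2 : y = y') (f : Hom x y) :
  hpack (castHom C e1 e2 f) = hpack f.
Proof. by destruct e1, e2. Qed.

Lemma vpack_vcast {b b' : bool} {x y : Ob C} (e : b = b') (f : vhom C b x y) :
  vpack (vcast C e f) = vpack f.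
Proof. by destruct e. Qed.

Lemma vpack_vflip {b : bool} {x y : Ob C} (f : vhom C (~~ b) x y) :
  vpack (vflip C f) = vpack f.
Proof. by case: b f. Qed.

Lemma vpack_ends {b : bool} {x y x' y' : Ob C} {f : vhom C b x y} {g : vhom C b x' y'} :
  vpack f = vpack g -> x = x' /\ y = y'.
Proof. by case: b f g => f g /hpack_ends [-> ->]. Qed.

Lemma vpack_inj {b : bool} {x y : Ob C} (f g : vhom C b x y) : vpack f = vpack g -> f = g.
Proof. by case: b f g => f g /hpack_inj. Qed.

Lemma hpack_comp {a b c a' b' c' : Ob C} (f : Hom a b) (g : Hom b c)
    (f' : Hom a' b') (g' : Hom b' c') :
  hpack f = hpack f' -> hpack g = hpack g' -> hpack (comp g f) = hpack (comp g' f').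
Proof.
move=> hf hg; case: (hpack_ends hf) => ea eb; case: (hpack_ends hg) => _ ec.
by subst; rewrite (hpack_inj _ _ hf) (hpack_inj _ _ hg).
Qed.

Lemma fm_vpack (F : mfun C) (X Y X' Y' : 'I_(ar_n C F) -> Ob C)
    (g : forall u, vhom C (ar C F u) (X u) (Y u))
    (g' : forall u, vhom C (ar C F u) (X' u) (Y' u)) :
  (forall u, vpack (g u) = vpack (g' u)) -> hpack (fm C F g) = hpack (fm C F g').
Proof.
move=> h.
have EX : X = X' by apply: functional_extensionality => u; case: (vpack_ends (h u)).
have EY : Y = Y' by apply: functional_extensionality => u; case: (vpack_ends (h u)).
subst; suff -> : g = g' by [].
by apply: functional_extensionality_dep => u; apply: vpack_inj; exact: h.
Qed.

Lemma hpack_tcomp (T : trans C) (A A' : 'I_(tn C T) -> Ob C) :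
  A = A' -> hpack (tcomp C T A) = hpack (tcomp C T A').
Proof. by move=> ->. Qed.

Lemma mfun_ext (F1 F2 : mfun C) (e : ar_n C F1 = ar_n C F2)
  (har : forall t1 t2, val t1 = val t2 -> ar C F1 t1 = ar C F2 t2)
  (hfo : forall X1 X2, (forall t1 t2, val t1 = val t2 -> X1 t1 = X2 t2) ->
         fo C F1 X1 = fo C F2 X2)
  (hfm : forall X1 Y1 X2 Y2 (f1 : forall t, vhom C (ar C F1 t) (X1 t) (Y1 t))
           (f2 : forall t, vhom C (ar C F2 t) (X2 t) (Y2 t)),
         (forall t1 t2, val t1 = val t2 -> vpack (f1 t1) = vpack (f2 t2)) ->
         hpack (fm C F1 f1) = hpack (fm C F2 f2)) : F1 = F2.
Proof.
case: F1 e har hfo hfm => n1 ar1 fo1 fm1; case: F2 => n2 ar2 fo2 fm2 /= e.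
subst n2 => har hfo hfm.
have ea : ar1 = ar2 by apply: functional_extensionality => t; apply: har.
subst ar2.
have ef : fo1 = fo2.
  by apply: functional_extensionality => X; apply: hfo => t1 t2 /val_inj ->.
subst fo2; suff -> : @fm1 = @fm2 by [].
apply: functional_extensionality_dep => X; apply: functional_extensionality_dep => Y.
apply: functional_extensionality_dep => f; apply: hpack_inj; apply: hfm.
by move=> t1 t2 /val_inj ->.
Qed.

Lemma trans_ext (T1 T2 : trans C) (ed : tdom C T1 = tdom C T2)
  (ec : tcod C T1 = tcod C T2) (en : tn C T1 = tn C T2)
  (hs : forall u1 u2, val u1 = val u2 -> val (tsig C T1 u1) = val (tsig C T2 u2))
  (ht : forall u1 u2, val u1 = val u2 -> val (ttau C T1 u1) = val (ttau C T2 u2))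
  (hc : forall A1 A2, (forall a1 a2, val a1 = val a2 -> A1 a1 = A2 a2) ->
        hpack (tcomp C T1 A1) = hpack (tcomp C T2 A2)) : T1 = T2.
Proof.
case: T1 ed ec en hs ht hc => d1 c1 n1 s1 t1 k1; case: T2 => d2 c2 n2 s2 t2 k2 /=.
move=> ed ec en; subst d2 c2 n2 => hs ht hc.
have es : s1 = s2 by apply: functional_extensionality => u; apply: val_inj; exact: hs.
have et : t1 = t2 by apply: functional_extensionality => u; apply: val_inj; exact: ht.
subst s2 t2; suff -> : k1 = k2 by [].
apply: functional_extensionality_dep => A; apply: hpack_inj; apply: hc.
by move=> a1 a2 /val_inj ->.
Qed.

End Packed.

(* Arithmetic of tagnat ranks.  [tagnat.Rank u v] is the position of the v-th
   element of the u-th block in a concatenation of blocks of sizes [p u]; a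
   nested rank [Rank (Rank u w) k] is a flat rank of the concatenation of the
   concatenations, at offset the sizes of the earlier sub-blocks. *)

Lemma sum_over_Rank {n} (p : 'I_n -> nat) (h : 'I_(\sum_(u < n) p u) -> nat)
    (Pr : pred 'I_(\sum_(u < n) p u)) :
  (\sum_(x | Pr x) h x =
   \sum_(u < n) \sum_(v < p u | Pr (tagnat.Rank u v)) h (tagnat.Rank u v))%N.
Proof.
rewrite (reindex (@tagnat.rank _ p)); last exact: onW_bij (tagnat.rank_bij).
rewrite (sig_big_dep xpredT (fun u v => Pr (tagnat.Rank u v))
                    (fun u v => h (tagnat.Rank u v))) /=.
by apply: eq_big => -[u v].
Qed.

Lemma prefix_sum_lt {m} (f : 'I_m -> nat) (w : 'I_m) (k : nat) :
  (k < f w)%N -> (\sum_(w' < m | (w' < w)%N) f w' + k < \sum_(w' < m) f w')%N.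
Proof.
move=> hk; rewrite [X in (_ < X)%N](bigID (fun w' : 'I_m => (w' < w)%N)) /=.
by rewrite ltn_add2l (bigD1 w) ?ltnn //= (leq_trans hk) // leq_addr.
Qed.

Section RankOrder.
Variables (n : nat) (p : 'I_n -> nat).
Local Notation S u := (\sum_(k < n | (k < u)%N) p k)%N.

Lemma prefix_sum_step (u' u : 'I_n) : (u' < u)%N -> (S u' + p u' <= S u)%N.
Proof.
move=> lt; rewrite [X in (_ <= X)%N](bigID (fun k : 'I_n => (k < u')%N)) /=.
apply: leq_add; last by rewrite (bigD1 u') /= ?ltnn ?lt // leq_addr.
rewrite leq_eqVlt; apply/orP; left; apply/eqP; apply: eq_bigl => k.
by case: (ltnP k u') => h; rewrite ?andbT ?andbF // (ltn_trans h lt).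
Qed.

Lemma Rank_ltn (u' u : 'I_n) (w' : 'I_(p u')) (w : 'I_(p u)) :
  (tagnat.Rank u' w' < tagnat.Rank u w)%N =
  ((u' < u)%N || ((u' == u) && (w' < w)%N)).
Proof.
rewrite !tagnat.RankEsum; have hw' := ltn_ord w'; have hw := ltn_ord w.
case: (ltngtP u' u) => h.
- rewrite orTb; apply: (leq_trans _ (leq_addr _ _)).
  by apply: (leq_trans _ (prefix_sum_step _ _ h)); rewrite ltn_add2l.
- have -> : (u' == u) = false by apply/eqP => e; rewrite e ltnn in h.
  rewrite orFb; apply/negP => hc; have := prefix_sum_step _ _ h.
  rewrite leqNgt => /negP; apply; apply: (leq_ltn_trans (leq_addr w' _)).
  by apply: (leq_trans hc); rewrite leq_add2l; exact: ltnW.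
- have e : u' = u by apply: val_inj.
  by subst u'; rewrite eqxx orFb andTb ltn_add2l.
Qed.
End RankOrder.

(* flattening a nested rank: blocks [r u] of sub-blocks of sizes [q], the
   block [u] of the flattened concatenation having size [pk u] *)
Lemma Rank_Rank {n} (r : 'I_n -> nat) (q : 'I_(\sum_(u < n) r u) -> nat)
    (pk : 'I_n -> nat) (hpk : forall u, pk u = \sum_(w < r u) q (tagnat.Rank u w))
    (u : 'I_n) (w : 'I_(r u)) (k : 'I_(q (tagnat.Rank u w))) (v : 'I_(pk u)) :
  (v : nat) = (\sum_(w' < r u | (w' < w)%N) q (tagnat.Rank u w') + k)%N ->
  (tagnat.Rank (tagnat.Rank u w) k : nat) = tagnat.Rank u v.
Proof.
move=> hv; rewrite (tagnat.RankEsum k) (tagnat.RankEsum v) hv addnA; congr (_ + _)%N.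
rewrite (sum_over_Rank r q (fun x => (x < tagnat.Rank u w)%N)).
rewrite (bigID (fun u' : 'I_n => (u' < u)%N)) /=; congr (_ + _)%N.
  apply: eq_bigr => u' hu'; rewrite hpk; apply: eq_bigl => w'.
  by rewrite Rank_ltn hu'.
rewrite (bigD1 u) ?ltnn //= [X in (_ + X)%N]big1 ?addn0.
  by apply: eq_bigl => w'; rewrite Rank_ltn ltnn eqxx.
move=> u' /andP [h1 h2]; apply: big1 => w'.
by rewrite Rank_ltn (negbTE h1) (negbTE h2).
Qed.

(* The blocks of a substituted functor: a block of type (c, g) is a copy of
   the substituted functor (c = true; of sign g) or a single unchanged
   argument (c = false). *)
Section Blocks.
Variables (C : category) (X Y : mfun C).

Lemma blk_ar_congr c g c' g' (k : 'I_(blk_k C X Y c g)) (k' : 'I_(blk_k C X Y c' g')) :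
  c = c' -> g = g' -> val k = val k' -> blk_ar C X Y c g k = blk_ar C X Y c' g' k'.
Proof. by move=> ec eg; subst c' g' => /val_inj ->. Qed.

Lemma blk_mor_vpack c g Xa Ya Xb Yb
    (fa : forall k, vhom C (blk_ar C X Y c g k) (Xa k) (Ya k))
    (fb : forall k, vhom C (blk_ar C X Y c g k) (Xb k) (Yb k)) :
  (forall k, vpack C (fa k) = vpack C (fb k)) ->
  vpack C (blk_mor C X Y c g fa) = vpack C (blk_mor C X Y c g fb).
Proof.
move: Xa Ya Xb Yb fa fb; case: c; case: g => /= Xa Ya Xb Yb fa fb h.
- exact: fm_vpack.
- by apply: fm_vpack => k; rewrite !vpack_vflip; exact: h.
- exact: h.
- exact: h.
Qed.

Lemma flip_k c g : blk_k C Y X c g = blk_k C X Y c (~~ g).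
Proof. by case: c; case: g. Qed.

Lemma flip_ar c g (k1 : 'I_(blk_k C Y X c g)) (k2 : 'I_(blk_k C X Y c (~~ g))) :
  val k1 = val k2 -> ~~ blk_ar C Y X c g k1 = blk_ar C X Y c (~~ g) k2.
Proof. by case: c k1 k2; case: g => /= k1 k2 /val_inj e; rewrite ?e ?negbK. Qed.

Lemma flip_obj c g (Y1 : 'I_(blk_k C Y X c g) -> Ob C)
    (Y2 : 'I_(blk_k C X Y c (~~ g)) -> Ob C) :
  (forall k1 k2, val k1 = val k2 -> Y1 k1 = Y2 k2) ->
  blk_obj C Y X c g Y1 = blk_obj C X Y c (~~ g) Y2.
Proof.
case: c Y1 Y2; case: g => /= Y1 Y2 h; try by apply: h.
all: by congr (fo _ _ _); apply: functional_extensionality => k; apply: h.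
Qed.

Lemma flip_mor c g Xa Ya Xb Yb
    (fa : forall k, vhom C (blk_ar C Y X c g k) (Xa k) (Ya k))
    (fb : forall k, vhom C (blk_ar C X Y c (~~ g) k) (Xb k) (Yb k)) :
  (forall k1 k2, val k1 = val k2 -> vpack C (fa k1) = vpack C (fb k2)) ->
  vpack C (blk_mor C Y X c g fa) = vpack C (blk_mor C X Y c (~~ g) fb).
Proof.
move: Xa Ya Xb Yb fa fb; case: c; case: g => /= Xa Ya Xb Yb fa fb h.
- by apply: fm_vpack => k; rewrite vpack_vflip; exact: h.
- by apply: fm_vpack => k; rewrite vpack_vflip; exact: h.
- exact: h.
- exact: h.
Qed.

End Blocks.

Section SubstAssoc.
Variable C : category.
Variables (H Hp Hn F G : mfun C) (P : 'I_(ar_n C H) -> bool)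
  (Qp : 'I_(ar_n C Hp) -> bool) (Qn : 'I_(ar_n C Hn) -> bool).
Local Notation L1p := (fsubst C Hp Qp F G).
Local Notation L1n := (fsubst C Hn Qn G F).
Local Notation L1 := (fsubst C H P L1p L1n).
Local Notation Mid := (fsubst C H P Hp Hn).
Variable (Q2 : 'I_(ar_n C Mid) -> bool).

Definition blkQ c g : 'I_(blk_k C Hp Hn c g) -> bool :=
  match c as c0, g as g0 return 'I_(blk_k C Hp Hn c0 g0) -> bool with
  | true, true => Qp | true, false => Qn | false, _ => fun _ => false end.

Hypothesis hQ2 : forall u w, Q2 (tagnat.Rank u w) = blkQ (P u) (ar C H u) w.
Local Notation R1 := (fsubst C Mid Q2 F G).

Definition qb c g (w : 'I_(blk_k C Hp Hn c g)) : nat :=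
  blk_k C F G (blkQ c g w) (blk_ar C Hp Hn c g w).

Local Notation r := (pk C H P Hp Hn).
Local Notation q := (pk C Mid Q2 F G).
Local Notation pk1 := (pk C H P L1p L1n).
Definition Sb c g (w : 'I_(blk_k C Hp Hn c g)) : nat :=
  \sum_(w' < blk_k C Hp Hn c g | w' < w) qb c g w'.

Lemma q_Rank u w : q (tagnat.Rank u w) = qb (P u) (ar C H u) w.
Proof. by rewrite /pk hQ2 /= sar_Rank. Qed.

Lemma S_qb u (w : 'I_(r u)) :
  (\sum_(w' < r u | (w' < w)%N) q (tagnat.Rank u w'))%N = Sb (P u) (ar C H u) w.
Proof. by apply: eq_bigr => w' _; rewrite q_Rank. Qed.

Lemma blk_sum c g : blk_k C L1p L1n c g = (\sum_(w < blk_k C Hp Hn c g) qb c g w)%N.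
Proof.
case: c; case: g => //=; last 2 first; [by rewrite big_ord1 .. |].
by apply: eq_bigr => w _; rewrite /qb /pk /=; case: (Qn w); case: (ar C Hn w).
Qed.

Lemma pk1_sum u : pk1 u = (\sum_(w < r u) q (tagnat.Rank u w))%N.
Proof.
have -> : pk1 u = blk_k C L1p L1n (P u) (ar C H u) by [].
by rewrite blk_sum; apply: eq_bigr => w _; rewrite q_Rank.
Qed.

Lemma subst_assoc_arity : ar_n C L1 = ar_n C R1.
Proof.
change ((\sum_u pk1 u)%N = (\sum_x q x)%N).
by rewrite (sum_over_Rank r q xpredT); apply: eq_bigr => u _; rewrite pk1_sum.
Qed.

Lemma assoc_index (t1 : 'I_(ar_n C L1)) (t2 : 'I_(ar_n C R1)) : val t1 = val t2 ->
  exists u w (k : 'I_(q (tagnat.Rank u w))) (v : 'I_(pk1 u)),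
    t1 = tagnat.Rank u v /\ t2 = tagnat.Rank (tagnat.Rank u w) k /\
    (v : nat) = (\sum_(w' < r u | (w' < w)%N) q (tagnat.Rank u w') + k)%N.
Proof.
rewrite -[t2](tagnat.sig2K t2); move: (tagnat.sig2 t2).
rewrite -[tagnat.sig1 t2](tagnat.sig2K (tagnat.sig1 t2)).
move: (tagnat.sig1 _) (tagnat.sig2 _) => u w k e.
have hlt : (\sum_(w' < r u | (w' < w)%N) q (tagnat.Rank u w') + k < pk1 u)%N.
  by rewrite pk1_sum; apply: prefix_sum_lt.
exists u, w, k, (Ordinal hlt); split; last by split.
by apply: val_inj; rewrite /= e; apply: (Rank_Rank r q pk1 pk1_sum).
Qed.

Lemma Rank_pos w (k : 'I_(qb true true w)) :
  (tagnat.Rank (p_ := pk C Hp Qp F G) w k : nat) = (Sb true true w + k)%N.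
Proof. by rewrite tagnat.RankEsum. Qed.

Lemma Rank_neg w (k : 'I_(pk C Hn Qn G F w)) :
  (tagnat.Rank (p_ := pk C Hn Qn G F) w k : nat) = (Sb true false w + k)%N.
Proof.
rewrite tagnat.RankEsum /Sb; congr (_ + _)%N; apply: eq_bigr => w' _.
by rewrite /qb /pk /= flip_k.
Qed.

Lemma Sb_false g (w : 'I_(blk_k C Hp Hn false g)) : Sb false g w = 0%N.
Proof. by rewrite /Sb big1 // => w'; case: w' w => [[]] // ? [[]]. Qed.

Lemma blk_ar_assoc c g (v : 'I_(blk_k C L1p L1n c g)) (w : 'I_(blk_k C Hp Hn c g))
    (k : 'I_(qb c g w)) :
  (v : nat) = (Sb c g w + k)%N ->
  blk_ar C L1p L1n c g v = blk_ar C F G (blkQ c g w) (blk_ar C Hp Hn c g w) k.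
Proof.
case: c v w k; case: g => //= v w k hv.
- have -> : v = tagnat.Rank w k by apply: ord_inj; rewrite hv Rank_pos.
  by rewrite sar_Rank.
- have e := flip_k C F G (Qn w) (ar C Hn w).
  have -> : v = tagnat.Rank w (cast_ord (esym e) k).
    by apply: ord_inj; rewrite hv Rank_neg.
  by rewrite sar_Rank; apply: flip_ar.
Qed.

Lemma blk_obj_assoc c g (X1 : 'I_(blk_k C L1p L1n c g) -> Ob C)
    (cq gq : 'I_(blk_k C Hp Hn c g) -> bool)
    (ecq : forall w, cq w = blkQ c g w) (egq : forall w, gq w = blk_ar C Hp Hn c g w)
    (X2 : forall w, 'I_(blk_k C F G (cq w) (gq w)) -> Ob C) :
  (forall (v : 'I_(blk_k C L1p L1n c g)) w (k : 'I_(blk_k C F G (cq w) (gq w))),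
     (v : nat) = (Sb c g w + k)%N -> X1 v = X2 w k) ->
  blk_obj C L1p L1n c g X1 =
  blk_obj C Hp Hn c g (fun w => blk_obj C F G (cq w) (gq w) (X2 w)).
Proof.
have E1 : cq = blkQ c g := functional_extensionality _ _ ecq.
have E2 : gq = blk_ar C Hp Hn c g := functional_extensionality _ _ egq.
subst cq gq; clear ecq egq; move: X1 X2; case: c; case: g => /= X1 X2 h.
- congr (fo _ _ _); apply: functional_extensionality => w.
  congr (blk_obj _ _ _ _ _ _); apply: functional_extensionality => k.
  by apply: h; rewrite Rank_pos.
- congr (fo _ _ _); apply: functional_extensionality => w.
  by apply: flip_obj => k1 k2 ek; apply: h; rewrite Rank_neg ek.
- by apply: h; rewrite Sb_false.
- by apply: h; rewrite Sb_false.
Qed.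

Lemma blk_mor_assoc c g Xa Ya
    (f1 : forall v, vhom C (blk_ar C L1p L1n c g v) (Xa v) (Ya v))
    (cq gq : 'I_(blk_k C Hp Hn c g) -> bool)
    (ecq : forall w, cq w = blkQ c g w) (egq : forall w, gq w = blk_ar C Hp Hn c g w)
    (e : forall w, gq w = blk_ar C Hp Hn c g w) Xb Yb
    (f2 : forall w (k : 'I_(blk_k C F G (cq w) (gq w))),
          vhom C (blk_ar C F G (cq w) (gq w) k) (Xb w k) (Yb w k)) :
  (forall (v : 'I_(blk_k C L1p L1n c g)) w (k : 'I_(blk_k C F G (cq w) (gq w))),
     (v : nat) = (Sb c g w + k)%N -> vpack C (f1 v) = vpack C (f2 w k)) ->
  vpack C (blk_mor C L1p L1n c g f1) =
  vpack C (blk_mor C Hp Hn c g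
             (fun w => vcast C (e w) (blk_mor C F G (cq w) (gq w) (f2 w)))).
Proof.
have E1 : cq = blkQ c g := functional_extensionality _ _ ecq.
have E2 : gq = blk_ar C Hp Hn c g := functional_extensionality _ _ egq.
subst cq gq; clear ecq egq => h.
have -> : vpack C (blk_mor C Hp Hn c g
                    (fun w => vcast C (e w) (blk_mor C F G _ _ (f2 w)))) =
          vpack C (blk_mor C Hp Hn c g (fun w => blk_mor C F G _ _ (f2 w))).
  by apply: blk_mor_vpack => w; rewrite vpack_vcast.
move: Xa Ya f1 Xb Yb f2 h {e}; case: c; case: g => /= Xa Ya f1 Xb Yb f2 h.
- apply: fm_vpack => w; apply: blk_mor_vpack => k; rewrite vpack_vcast.
  by apply: h; rewrite Rank_pos.
- apply: fm_vpack => w; rewrite vpack_vflip; apply: flip_mor => k1 k2 ek.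
  by rewrite vpack_vcast vpack_vflip; apply: h; rewrite Rank_neg ek.
- by apply: h; rewrite Sb_false.
- by apply: h; rewrite Sb_false.
Qed.

Lemma subst_assoc : L1 = R1.
Proof.
apply: (mfun_ext C L1 R1 subst_assoc_arity).
- move=> t1 t2 /assoc_index [u [w [k [v [-> [-> hv]]]]]].
  change (sar C H P L1p L1n (tagnat.Rank u v) =
          sar C Mid Q2 F G (tagnat.Rank (tagnat.Rank u w) k)).
  rewrite !sar_Rank (blk_ar_assoc _ _ v w (cast_ord (q_Rank u w) k));
    last by rewrite hv S_qb.
  by apply: blk_ar_congr; [rewrite hQ2 | rewrite /= sar_Rank |].
- move=> X1 X2 hX.
  change (fo C H (fun u => blk_obj C L1p L1n (P u) (ar C H u)
                    (fun v => X1 (tagnat.Rank u v))) =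
          fo C H (fun u => blk_obj C Hp Hn (P u) (ar C H u) (fun w =>
             blk_obj C F G (Q2 (tagnat.Rank u w)) (sar C H P Hp Hn (tagnat.Rank u w))
               (fun k => X2 (tagnat.Rank (tagnat.Rank u w) k))))).
  congr (fo _ _ _); apply: functional_extensionality => u.
  apply: blk_obj_assoc => [w|w|v w k hv]; [exact: hQ2 | exact: sar_Rank |].
  by apply: hX; apply: esym; apply: (Rank_Rank r q pk1 pk1_sum); rewrite hv S_qb.
- move=> X1 Y1 X2 Y2 f1 f2 hf.
  change (hpack C (fm C H (fun u => blk_mor C L1p L1n (P u) (ar C H u)
             (fun v => vcast C (sar_Rank C H P L1p L1n u v) (f1 (tagnat.Rank u v))))) =
          hpack C (fm C H (fun u => blk_mor C Hp Hn (P u) (ar C H u) (fun w =>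
             vcast C (sar_Rank C H P Hp Hn u w)
              (blk_mor C F G (Q2 (tagnat.Rank u w)) (ar C Mid (tagnat.Rank u w))
                (fun k => vcast C (sar_Rank C Mid Q2 F G (tagnat.Rank u w) k)
                     (f2 (tagnat.Rank (tagnat.Rank u w) k)))))))).
  apply: fm_vpack => u.
  apply: (blk_mor_assoc _ _ _ _ _ (fun w => Q2 (tagnat.Rank u w))
            (fun w => sar C H P Hp Hn (tagnat.Rank u w))) => [w|w|v w k hv].
  + exact: hQ2.
  + exact: sar_Rank.
  + rewrite !vpack_vcast; apply: hf; apply: esym.
    by apply: (Rank_Rank r q pk1 pk1_sum); rewrite hv S_qb.
Qed.

End SubstAssoc.

(* Variables of a horizontal composite.  In phi *_i psi, the variable a of
   phi becomes [inA i a] and the variable b <> i of psi becomes [newB n _],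
   whose value is [outer_pos i b n]. *)

Lemma inA_eq {m n} (a : 'I_m) (b b' : 'I_n) : (inA a b == inA a b') = (b == b').
Proof. by apply/eqP/eqP => [/(congr1 val) /= e|->] //; apply: val_inj => /=; lia. Qed.

Definition outer_pos (a b n : nat) : nat := if (b < a)%N then b else (b.-1 + n)%N.

Lemma newB_neq_inA {l m} {j b : 'I_l} (h : b != j) (i : 'I_m) : newB m h != inA j i.
Proof.
apply/eqP => /(congr1 val) /=; have hi := ltn_ord i.
have hne : (b : nat) <> j by move=> e; move/eqP: h; apply; exact: val_inj.
by case: ifP => hl; lia.
Qed.

Lemma smap_Rank C H P Fp Fn N mp mn mo u (v : 'I_(pk C H P Fp Fn u)) :
  smap C H P Fp Fn N mp mn mo (tagnat.Rank u v) =
  blk_map C Fp Fn N mp mn (P u) (ar C H u) (mo u) v.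
Proof. by rewrite /smap /tagnat.Rank tagnat.rankK. Qed.

Section BlockValues.
Variables (C : category) (X Y : mfun C).

Definition blk_val (fp : 'I_(ar_n C X) -> nat) (fn : 'I_(ar_n C Y) -> nat) (z : nat)
    (c g : bool) : 'I_(blk_k C X Y c g) -> nat :=
  match c as c0, g as g0 return 'I_(blk_k C X Y c0 g0) -> nat with
  | true, true => fp | true, false => fn | false, _ => fun _ => z end.

Lemma blk_map_val N mp mn c g (mo : c = false -> 'I_N) k z :
  (forall h, (mo h : nat) = z) ->
  (blk_map C X Y N mp mn c g mo k : nat) =
  blk_val (fun a => mp a : nat) (fun a => mn a : nat) z c g k.
Proof. by case: c mo k; case: g => /= mo k h //; rewrite h. Qed.

Lemma blk_val_congr fp fn z z' c g c' g' (k : 'I_(blk_k C X Y c g))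
    (k' : 'I_(blk_k C X Y c' g')) :
  c = c' -> g = g' -> val k = val k' -> (c' = false -> z = z') ->
  blk_val fp fn z c g k = blk_val fp fn z' c' g' k'.
Proof.
move=> ec eg; subst c' g' => e hz; have {e} -> : k = k' by apply: val_inj.
by case: c hz k' {k} => hz k' //=; rewrite hz.
Qed.

Lemma blk_val_shift fa fb fa' fb' za zb d c g (k : 'I_(blk_k C X Y c g)) :
  (forall a, (d + fa a)%N = fa' a) -> (forall a, (d + fb a)%N = fb' a) ->
  (c = false -> (d + za)%N = zb) ->
  (d + blk_val fa fb za c g k)%N = blk_val fa' fb' zb c g k.
Proof. by case: c k; case: g => /= k h1 h2 h3; rewrite ?h1 ?h2 ?h3. Qed.

End BlockValues.

Lemma blk_val_flip C (X Y : mfun C) fa fb z c g (k1 : 'I_(blk_k C Y X c g))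
    (k2 : 'I_(blk_k C X Y c (~~ g))) :
  val k1 = val k2 -> blk_val C Y X fa fb z c g k1 = blk_val C X Y fb fa z c (~~ g) k2.
Proof. by case: c k1 k2; case: g => /= k1 k2 /val_inj e; rewrite ?e. Qed.

Lemma blk_map_selects C (X Y : mfun C) {l m : nat} (j : 'I_l) (i : 'I_m)
    (sx : 'I_(ar_n C X) -> 'I_m) (sy : 'I_(ar_n C Y) -> 'I_m) c g
    (mo : c = false -> 'I_(l.-1 + m)) w :
  (forall h, mo h != inA j i) ->
  (blk_map C X Y _ (fun v => inA j (sx v)) (fun v => inA j (sy v)) c g mo w == inA j i) =
  blkQ C X Y (fun v => sx v == i) (fun v => sy v == i) c g w.
Proof. by case: c mo w; case: g => /= mo w h; rewrite ?inA_eq //; exact/negbTE/h. Qed.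

(* The type map of the domain (or codomain) of a horizontal composite, as a
   function of the data it depends on: a functor X with type map sX into the
   variables of the outer transformation, into which FP and FN, with type
   maps fP and fN into the variables of the inner one, are substituted. *)
Definition hmap {C : category} {m n : nat} (X : mfun C) (sX : 'I_(ar_n C X) -> 'I_m)
    (FP FN : mfun C) (fP : 'I_(ar_n C FP) -> 'I_n) (fN : 'I_(ar_n C FN) -> 'I_n)
    (i : 'I_m) : 'I_(ar_n C (fsubst C X (fun u => sX u == i) FP FN)) -> 'I_(m.-1 + n) :=
  smap C X (fun u => sX u == i) FP FN (m.-1 + n) (fun a => inA i (fP a))
       (fun a => inA i (fN a)) (fun u h => newB n (negbT h)).

(* Associativity of the domain (resp. codomain) functor and of its type map:
   X, Y1, Y2, F1, F2 stand for the domain of chi, psi and phi (resp. the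
   codomain of chi, psi and phi, the domain of psi, the domain of phi). *)
Section IndexAssoc.
Variables (C : category) (l m n : nat) (X Y1 Y2 F1 F2 : mfun C)
  (sX : 'I_(ar_n C X) -> 'I_l) (y1 : 'I_(ar_n C Y1) -> 'I_m)
  (y2 : 'I_(ar_n C Y2) -> 'I_m) (f1 : 'I_(ar_n C F1) -> 'I_n)
  (f2 : 'I_(ar_n C F2) -> 'I_n) (i : 'I_m) (j : 'I_l).

Local Notation P := (fun u => sX u == j).
Local Notation Q1 := (fun v => y1 v == i).
Local Notation Q2 := (fun v => y2 v == i).
Local Notation Z1 := (fsubst C Y1 Q1 F1 F2).
Local Notation Z2 := (fsubst C Y2 Q2 F2 F1).
Local Notation Mid := (fsubst C X P Y1 Y2).
Local Notation midmap := (hmap X sX Y1 Y2 y1 y2 j).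

Lemma hmap_selects u w :
  (midmap (tagnat.Rank u w) == inA j i) = blkQ C Y1 Y2 Q1 Q2 (P u) (ar C X u) w.
Proof.
by rewrite /hmap smap_Rank blk_map_selects // => h; exact: newB_neq_inA.
Qed.

Lemma hsubst_assoc :
  fsubst C X P Z1 Z2 = fsubst C Mid (fun x => midmap x == inA j i) F1 F2.
Proof. exact: subst_assoc hmap_selects. Qed.

Lemma hmap_block_val c g (v : 'I_(blk_k C Z1 Z2 c g)) (w : 'I_(blk_k C Y1 Y2 c g))
    (k : 'I_(qb C Y1 Y2 F1 F2 Q1 Q2 c g w)) (b : nat) :
  (c = false -> b <> j) ->
  (v : nat) = (Sb C Y1 Y2 F1 F2 Q1 Q2 c g w + k)%N ->
  blk_val C Z1 Z2 (fun a => inA j (hmap Y1 y1 F1 F2 f1 f2 i a) : nat)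
    (fun a => inA j (hmap Y2 y2 F2 F1 f2 f1 i a) : nat)
    (outer_pos j b (m.-1 + n)) c g v =
  blk_val C F1 F2 (fun a => inA (inA j i) (f1 a) : nat)
    (fun a => inA (inA j i) (f2 a) : nat)
    (outer_pos (inA j i) (blk_val C Y1 Y2 (fun a => inA j (y1 a) : nat)
        (fun a => inA j (y2 a) : nat) (outer_pos j b m) c g w) n)
    (blkQ C Y1 Y2 Q1 Q2 c g w) (blk_ar C Y1 Y2 c g w) k.
Proof.
have hi := ltn_ord i.
have hne (y : 'I_m) : (y == i) = false -> (y : nat) <> i.
  by move=> hy e; move/eqP: (negbT hy); apply; exact: val_inj.
case: c v w k; case: g => /= v w k hb hv.
- have -> : v = tagnat.Rank w k by apply: ord_inj; rewrite hv Rank_pos.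
  rewrite /hmap smap_Rank (blk_map_val _ _ _ _ _ _ _ _ _ _ (outer_pos i (y1 w) n)) //.
  apply: blk_val_shift => [a|a|/hne hq] /=; rewrite ?addnA //.
  by rewrite /outer_pos; case: ifP; case: ifP => h1 h2; lia.
- have e := flip_k C F1 F2 (y2 w == i) (ar C Y2 w).
  have -> : v = tagnat.Rank w (cast_ord (esym e) k).
    by apply: ord_inj; rewrite hv (Rank_neg C Y1 Y2 F1 F2 Q1 Q2).
  rewrite /hmap smap_Rank (blk_map_val _ _ _ _ _ _ _ _ _ _ (outer_pos i (y2 w) n)) //.
  rewrite (blk_val_flip _ _ _ _ _ _ _ _ _ k) //.
  apply: blk_val_shift => [a|a|/hne hq] /=; rewrite ?addnA //.
  by rewrite /outer_pos; case: ifP; case: ifP => h1 h2; lia.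
- by have hb' := hb erefl; rewrite /outer_pos /=; repeat (case: ifP => ?); lia.
- by have hb' := hb erefl; rewrite /outer_pos /=; repeat (case: ifP => ?); lia.
Qed.

Lemma hmap_assoc (t1 : 'I_(ar_n C (fsubst C X P Z1 Z2)))
    (t2 : 'I_(ar_n C (fsubst C Mid (fun x => midmap x == inA j i) F1 F2))) :
  val t1 = val t2 ->
  (hmap X sX Z1 Z2 (hmap Y1 y1 F1 F2 f1 f2 i) (hmap Y2 y2 F2 F1 f2 f1 i) j t1 : nat) =
  hmap Mid midmap F1 F2 f1 f2 (inA j i) t2.
Proof.
move=> /(assoc_index _ _ _ _ _ _ _ _ _ _ hmap_selects) [u [w [k [v [-> [-> hv]]]]]].
rewrite /hmap !smap_Rank.
rewrite (blk_map_val _ _ _ _ _ _ _ _ _ _ (outer_pos j (sX u) (m.-1 + n))) //.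
rewrite (blk_map_val _ _ _ _ _ _ _ _ _ _
   (outer_pos (inA j i) (midmap (tagnat.Rank u w)) n)) //.
have eq := q_Rank C X Y1 Y2 F1 F2 P Q1 Q2 (fun x => midmap x == inA j i) hmap_selects u w.
rewrite (hmap_block_val _ _ v w (cast_ord eq k) (sX u)); first last.
- by rewrite hv (S_qb C X Y1 Y2 F1 F2 P Q1 Q2 (fun x => midmap x == inA j i) hmap_selects).
- by move=> /negbT hsx e; move/eqP: hsx; apply; exact: val_inj.
apply: esym; apply: blk_val_congr => //.
- exact: hmap_selects.
- by rewrite /= sar_Rank.
- move=> _; congr outer_pos.
  by rewrite /hmap smap_Rank (blk_map_val _ _ _ _ _ _ _ _ _ _ (outer_pos j (sX u) m)).
Qed.

End IndexAssoc.

Section MtupComp.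
Variable C : category.

Lemma fm_mtup_comp (X : mfun C) (fX : is_functor C X) {n} (sg : 'I_(ar_n C X) -> 'I_n)
    (A : 'I_n -> Ob C) (i : 'I_n) (p1 p2 p3 : bool -> Ob C)
    (g1n : Hom (p2 false) (p1 false)) (g1p : Hom (p1 true) (p2 true))
    (g2n : Hom (p3 false) (p2 false)) (g2p : Hom (p2 true) (p3 true)) :
  comp (fm C X (mtup C (ar C X) sg A i p2 p3 g2n g2p))
       (fm C X (mtup C (ar C X) sg A i p1 p2 g1n g1p)) =
  fm C X (mtup C (ar C X) sg A i p1 p3 (comp g1n g2n) (comp g2p g1p)).
Proof.
case: fX => _ fc; rewrite -fc; congr (fm C X _).
apply: functional_extensionality_dep => u; rewrite /mtup /obs.
by case: (sg u == i) => //; case: (ar C X u) => //=; exact: comp_id_l.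
Qed.

Lemma vpack_mtup {k n} (al : 'I_k -> bool) (sg : 'I_k -> 'I_n) (A : 'I_n -> Ob C)
    (i : 'I_n) (p1 p2 : bool -> Ob C) (fn : Hom (p2 false) (p1 false))
    (fp : Hom (p1 true) (p2 true)) u :
  vpack C (mtup C al sg A i p1 p2 fn fp u) =
  if sg u == i then (if al u then hpack C fp else hpack C fn)
  else hpack C (idm (A (sg u))).
Proof. by rewrite /mtup /obs; case: (sg u == i); case: (al u). Qed.

End MtupComp.

(* Both components of a doubly horizontal composite take this
   form, with h, k built from phi and psi. *)
Section DinatForm.
Variables (C : category) (T : trans C) (j : 'I_(tn C T)).
Hypotheses (fL : is_functor C (tdom C T)) (fM : is_functor C (tcod C T))
  (dT : dinatural_in C T j).
Local Notation L := (tdom C T).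
Local Notation M := (tcod C T).
Local Notation sT := (tsig C T).
Local Notation tT := (ttau C T).

Definition dinat_form (A : 'I_(tn C T) -> Ob C) (D E H : Ob C) (h : Hom D H)
    (k : Hom H E) :
  Hom (fo C L (obs C (ar C L) sT A j (pc C E D))) (fo C M (obs C (ar C M) tT A j (pc C D E))) :=
  comp (fm C M (mtup C (ar C M) tT A j (fun _ => H) (pc C D E) h k))
   (comp (tcomp C T (subst1 C A j H))
         (fm C L (mtup C (ar C L) sT A j (pc C E D) (fun _ => H) k h))).

(* dinaturality in j slides h through T *)
Lemma dinat_form_slide A D E H (h : Hom D H) (k : Hom H E) :
  comp (fm C M (mtup C (ar C M) tT A j (fun _ => D) (pc C D E) (idm D) (comp k h)))
   (comp (tcomp C T (subst1 C A j D))
     (fm C L (mtup C (ar C L) sT A j (pc C E D) (fun _ => D) (comp k h) (idm D)))) =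
  dinat_form A D E H h k.
Proof.
have eM := fm_mtup_comp C M fM tT A j (fun _ => D) (pc C D H) (pc C D E) (idm D) h (idm D) k.
rewrite comp_id_l in eM; rewrite -eM {eM}.
have eL := fm_mtup_comp C L fL sT A j (pc C E D) (pc C H D) (fun _ => D) k (idm D) h (idm D).
rewrite comp_id_l in eL; rewrite -eL {eL}.
set Mk := fm C M (mtup C (ar C M) tT A j (pc C D H) (pc C D E) (idm D) k).
set Lk := fm C L (mtup C (ar C L) sT A j (pc C E D) (pc C H D) k (idm D)).
set Mh := fm C M (mtup C (ar C M) tT A j (fun _ => D) (pc C D H) (idm D) h).
set Lh := fm C L (mtup C (ar C L) sT A j (pc C H D) (fun _ => D) h (idm D)).
transitivity (comp Mk (comp (comp Mh (comp (tcomp C T (subst1 C A j D)) Lh)) Lk)).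
  by rewrite !comp_assoc.
rewrite /Mh /Lh (dT A D H h).
transitivity (comp (comp Mk (fm C M (mtup C (ar C M) tT A j (fun _ => H) (pc C D H) h (idm H))))
   (comp (tcomp C T (subst1 C A j H))
     (comp (fm C L (mtup C (ar C L) sT A j (pc C H D) (fun _ => H) (idm H) h)) Lk))).
  by rewrite !comp_assoc.
by rewrite /Mk /Lk !fm_mtup_comp // !comp_id_r.
Qed.

(* functoriality merges an outer pair (hf, kf) into the form with kf o ps *)
Lemma dinat_form_merge A D E H K' (hf : Hom D H) (kf : Hom K' E) (ps : Hom H K') :
  comp (fm C M (mtup C (ar C M) tT A j (pc C H K') (pc C D E) hf kf))
   (comp (comp (fm C M (mtup C (ar C M) tT A j (fun _ => H) (pc C H K') (idm H) ps))
           (comp (tcomp C T (subst1 C A j H))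
                 (fm C L (mtup C (ar C L) sT A j (pc C K' H) (fun _ => H) ps (idm H)))))
         (fm C L (mtup C (ar C L) sT A j (pc C E D) (pc C K' H) kf hf))) =
  dinat_form A D E H hf (comp kf ps).
Proof.
set X1 := fm C M (mtup C (ar C M) tT A j (pc C H K') (pc C D E) hf kf).
set Y1 := fm C M (mtup C (ar C M) tT A j (fun _ => H) (pc C H K') (idm H) ps).
set Z1 := fm C L (mtup C (ar C L) sT A j (pc C K' H) (fun _ => H) ps (idm H)).
set X2 := fm C L (mtup C (ar C L) sT A j (pc C E D) (pc C K' H) kf hf).
transitivity (comp (comp X1 Y1) (comp (tcomp C T (subst1 C A j H)) (comp Z1 X2))).
  by rewrite !comp_assoc.
by rewrite /X1 /Y1 /Z1 /X2 !fm_mtup_comp // !comp_id_l.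
Qed.

Lemma dinat_form_slide_packed A D E (Ps : Hom D E) D0 E0 H (h : Hom D0 H) (k : Hom H E0) :
  hpack C Ps = hpack C (comp k h) ->
  hpack C (comp (fm C M (mtup C (ar C M) tT A j (fun _ => D) (pc C D E) (idm D) Ps))
   (comp (tcomp C T (subst1 C A j D))
     (fm C L (mtup C (ar C L) sT A j (pc C E D) (fun _ => D) Ps (idm D))))) =
  hpack C (dinat_form A D0 E0 H h k).
Proof.
move=> e; case: (hpack_ends C e) => e1 e2; subst D0 E0.
by rewrite (hpack_inj C _ _ e) dinat_form_slide.
Qed.

Lemma dinat_form_merge_packed A D E H K' (hf : Hom D H) (kf : Hom K' E) (ps : Hom H K')
    a1 b1 a2 a3 (X1 : Hom a1 b1) (Xi : Hom a2 a1) (X2 : Hom a3 a2) :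
  hpack C X1 = hpack C (fm C M (mtup C (ar C M) tT A j (pc C H K') (pc C D E) hf kf)) ->
  hpack C Xi = hpack C (comp (fm C M (mtup C (ar C M) tT A j (fun _ => H) (pc C H K') (idm H) ps))
           (comp (tcomp C T (subst1 C A j H))
                 (fm C L (mtup C (ar C L) sT A j (pc C K' H) (fun _ => H) ps (idm H))))) ->
  hpack C X2 = hpack C (fm C L (mtup C (ar C L) sT A j (pc C E D) (pc C K' H) kf hf)) ->
  hpack C (comp X1 (comp Xi X2)) = hpack C (dinat_form A D E H hf (comp kf ps)).
Proof.
move=> h1 h2 h3; rewrite -dinat_form_merge.
by apply: hpack_comp => //; exact: hpack_comp.
Qed.

Lemma dinat_form_congr A A' D E H (h : Hom D H) (k : Hom H E) D' E' H'
    (h' : Hom D' H') (k' : Hom H' E') :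
  (forall c, c != j -> A c = A' c) -> hpack C h = hpack C h' -> hpack C k = hpack C k' ->
  hpack C (dinat_form A D E H h k) = hpack C (dinat_form A' D' E' H' h' k').
Proof.
move=> hA eh ek; case: (hpack_ends C eh) => e1 e2; subst D' H'.
case: (hpack_ends C ek) => _ e3; subst E'.
rewrite -(hpack_inj C _ _ eh) -(hpack_inj C _ _ ek) {eh ek h' k'}.
have hs : subst1 C A j H = subst1 C A' j H.
  apply: functional_extensionality => v; rewrite /subst1.
  by case: eqP => // /eqP hv; apply: hA.
rewrite /dinat_form; apply: hpack_comp; first apply: hpack_comp.
- apply: fm_vpack => u; rewrite !vpack_mtup.
  by case Ee: (sT u == j) => //; rewrite hA // Ee.
- exact: hpack_tcomp.
- apply: fm_vpack => u; rewrite !vpack_mtup.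
  by case Ee: (tT u == j) => //; rewrite hA // Ee.
Qed.

End DinatForm.

Lemma hO_off C phi psi i V b (h : (b == i) = false) :
  hO C phi psi i V b = V (newB (tn C phi) (negbT h)).
Proof.
suff gen : forall c (e : (b == i) = c),
  (if c as c0 return ((b == i) = c0 -> Ob C) then fun _ => hFv C phi psi i V
   else fun h0 => V (newB (tn C phi) (negbT h0))) e = V (newB (tn C phi) (negbT h)).
  exact: gen.
case=> e; first by exfalso; move: h; rewrite e.
by congr V; apply: val_inj.
Qed.

Lemma subst1_off C {n} (A : 'I_n -> Ob C) i a v : v != i -> subst1 C A i a v = A v.
Proof. by rewrite /subst1 => /negbTE ->. Qed.

Lemma subst1_at C {n} (A : 'I_n -> Ob C) i a : subst1 C A i a i = a.
Proof. by rewrite /subst1 eqxx. Qed.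

Lemma hpack_fm_fsubst C H P Fp Fn X Y (f : forall t, vhom C (sar C H P Fp Fn t) (X t) (Y t)) :
  hpack C (fm C (fsubst C H P Fp Fn) f) =
  hpack C (fm C H (fun u => blk_mor C Fp Fn (P u) (ar C H u)
    (fun v => vcast C (sar_Rank C H P Fp Fn u v) (f (tagnat.Rank u v))))).
Proof. by []. Qed.

Section Components.
Variables (C : category) (phi psi chi : trans C) (i : 'I_(tn C psi)) (j : 'I_(tn C chi)).
Local Notation F := (tdom C phi).
Local Notation G := (tcod C phi).
Local Notation H := (tdom C psi).
Local Notation K := (tcod C psi).
Local Notation L := (tdom C chi).
Local Notation M := (tcod C chi).
Local Notation Psi := (hcomp C phi psi i).
Local Notation Xi := (hcomp C psi chi j).
Local Notation ji := (inA j i).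
Local Notation LHS := (hcomp C Psi chi j).
Local Notation RHS := (hcomp C phi Xi ji).

Variables (A1 : 'I_(tn C LHS) -> Ob C) (A2 : 'I_(tn C RHS) -> Ob C).
Hypothesis hA12 : forall a1 a2, val a1 = val a2 -> A1 a1 = A2 a2.

(* the variables of phi, psi, chi at which their components are taken, on the
   left (suffix L) and on the right (suffix R) *)
Local Notation phiL := (hA C phi psi i (hA C Psi chi j A1)).
Local Notation FL := (hFv C phi psi i (hA C Psi chi j A1)).
Local Notation GL := (hGv C phi psi i (hA C Psi chi j A1)).
Local Notation psiL := (hO C phi psi i (hA C Psi chi j A1)).
Local Notation chiL := (hO C Psi chi j A1).
Local Notation phiR := (hA C phi Xi ji A2).
Local Notation FR := (hFv C phi Xi ji A2).
Local Notation GR := (hGv C phi Xi ji A2).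
Local Notation XiR := (hO C phi Xi ji A2).
Local Notation U := (subst1 C XiR ji FR).
Local Notation psiR := (hA C psi chi j U).
Local Notation chiR := (hO C psi chi j U).
Local Notation FU := (hFv C psi chi j U).
Local Notation GU := (hGv C psi chi j U).

Lemma phi_vars_eq : phiL = phiR.
Proof. by apply: functional_extensionality => a; apply: hA12 => /=; lia. Qed.

Lemma F_vars_eq : FL = FR.
Proof. by rewrite /hFv phi_vars_eq. Qed.

Lemma psiR_at : psiR i = FR.
Proof. by rewrite /hA subst1_at. Qed.

Lemma psiR_off b : b != i -> psiR b = XiR (inA j b).
Proof. by move=> hb; rewrite /hA subst1_off // inA_eq. Qed.

Lemma psi_vars_off b : b != i -> psiL b = psiR b.
Proof.
move=> hb; have h' : (inA j b == ji) = false by rewrite inA_eq (negbTE hb).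
rewrite (hO_off _ _ _ _ _ _ (negbTE hb)) psiR_off //.
rewrite (hO_off C phi Xi ji A2 (inA j b) h'); apply: hA12 => /=.
have hbi : (b : nat) <> i by move=> e; move/eqP: hb; apply; exact: val_inj.
by case: ifP; case: ifP => h1 h2; lia.
Qed.

Lemma psi_vars_eq : subst1 C psiL i FL = psiR.
Proof.
apply: functional_extensionality => v; case: (eqVneq v i) => [->|hv].
  by rewrite subst1_at psiR_at F_vars_eq.
by rewrite subst1_off // psi_vars_off.
Qed.

Lemma chiR_off c (h : (c == j) = false) : chiR c = XiR (newB (tn C psi) (negbT h)).
Proof. by rewrite (hO_off _ _ _ _ _ _ h) subst1_off //; exact: newB_neq_inA. Qed.

Lemma chi_vars_off c : c != j -> chiL c = chiR c.
Proof.
move=> hc; rewrite (hO_off _ _ _ _ _ _ (negbTE hc)) (chiR_off _ (negbTE hc)).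
have h' := newB_neq_inA (negbT (negbTE hc)) i.
rewrite (hO_off C phi Xi ji A2 _ (negbTE h')); apply: hA12 => /=.
have hcj : (c : nat) <> j by move=> e; move/eqP: (hc); apply; exact: val_inj.
by have := ltn_ord i; repeat (case: ifP => ?); lia.
Qed.

(* H and K applied to phi in their i-slots: the outer factors of the
   component of phi *_(j+i) (psi *_j chi), typed with the endpoints of psi's
   component at U *)
Local Notation DR := (fo C H (obs C (ar C H) (tsig C psi) psiR i (pc C GR FR))).
Local Notation ER := (fo C K (obs C (ar C K) (ttau C psi) psiR i (pc C FR GR))).
Local Notation Hphi := (fm C H (mtup C (ar C H) (tsig C psi) psiR i (pc C GR FR)
                          (fun _ => FR) (tcomp C phi phiR) (idm FR))).
Local Notation Kphi := (fm C K (mtup C (ar C K) (ttau C psi) psiR i (fun _ => FR)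
                          (pc C FR GR) (idm FR) (tcomp C phi phiR))).

Lemma FU_eq : fo C H (obs C (ar C H) (tsig C psi) psiR i (fun _ => FR)) = FU.
Proof.
congr (fo _ _ _); apply: functional_extensionality => x; rewrite /obs.
by case: eqP => [->|] //; rewrite psiR_at.
Qed.

Lemma GU_eq : fo C K (obs C (ar C K) (ttau C psi) psiR i (fun _ => FR)) = GU.
Proof.
congr (fo _ _ _); apply: functional_extensionality => x; rewrite /obs.
by case: eqP => [->|] //; rewrite psiR_at.
Qed.

Definition Hphi_U : Hom DR FU := castHom C erefl FU_eq Hphi.
Definition Kphi_U : Hom GU ER := castHom C GU_eq erefl Kphi.

Lemma hcod_blk_phi c g (mo : c = false -> 'I_(tn C Xi)) a Xa Ya
    (fb : forall w, vhom C (blk_ar C K H c g w) (Xa w) (Ya w)) :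
  (forall w, vpack C (fb w) =
     let x := blk_map C K H _ (fun v => inA j (ttau C psi v))
                              (fun v => inA j (tsig C psi v)) c g mo w in
     if x == ji then
       (if blk_ar C K H c g w then hpack C (tcomp C phi phiR) else hpack C (idm FR))
     else hpack C (idm (XiR x))) ->
  (forall h, mo h != ji) -> (forall h, XiR (mo h) = a) ->
  vpack C (blk_mor C K H c g fb) =
  if c then (if g then hpack C Kphi else hpack C Hphi) else hpack C (idm a).
Proof.
move: mo Xa Ya fb; case: c; case: g => /= mo Xa Ya fb hfb hmo ha.
- apply: fm_vpack => v; rewrite hfb vpack_mtup /= inA_eq.
  by case E: (ttau C psi v == i) => //; rewrite psiR_off ?E.
- apply: fm_vpack => v; rewrite vpack_vflip hfb vpack_mtup /= inA_eq.
  case E: (tsig C psi v == i); last by rewrite psiR_off ?E.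
  by case: (ar C H v).
- by move: (hfb ord0) => /= ->; rewrite (negbTE (hmo erefl)) ha.
- by move: (hfb ord0) => /= ->; rewrite (negbTE (hmo erefl)) ha.
Qed.

Lemma hcod_phi_action :
  hpack C (fm C (tcod C Xi) (mtup C (ar C (tcod C Xi)) (ttau C Xi) XiR ji
             (fun _ => FR) (pc C FR GR) (idm FR) (tcomp C phi phiR))) =
  hpack C (fm C M (mtup C (ar C M) (ttau C chi) chiR j (pc C FU GU) (pc C DR ER)
             Hphi_U Kphi_U)).
Proof.
rewrite hpack_fm_fsubst; apply: fm_vpack => u; rewrite vpack_mtup /Hphi_U /Kphi_U.
rewrite !hpack_castHom.
apply: (hcod_blk_phi _ _ (fun h => newB (tn C psi) (negbT h)) (chiR (ttau C chi u))).
- by move=> w; rewrite vpack_vcast vpack_mtup /= /htau smap_Rank sar_Rank.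
- by move=> h; exact: newB_neq_inA.
- by move=> h; rewrite chiR_off.
Qed.

Lemma hdom_blk_phi c g (mo : c = false -> 'I_(tn C Xi)) a Xa Ya
    (fb : forall w, vhom C (blk_ar C H K c g w) (Xa w) (Ya w)) :
  (forall w, vpack C (fb w) =
     let x := blk_map C H K _ (fun v => inA j (tsig C psi v))
                              (fun v => inA j (ttau C psi v)) c g mo w in
     if x == ji then
       (if blk_ar C H K c g w then hpack C (idm FR) else hpack C (tcomp C phi phiR))
     else hpack C (idm (XiR x))) ->
  (forall h, mo h != ji) -> (forall h, XiR (mo h) = a) ->
  vpack C (blk_mor C H K c g fb) =
  if c then (if g then hpack C Hphi else hpack C Kphi) else hpack C (idm a).
Proof.
move: mo Xa Ya fb; case: c; case: g => /= mo Xa Ya fb hfb hmo ha.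
- apply: fm_vpack => v; rewrite hfb vpack_mtup /= inA_eq.
  by case E: (tsig C psi v == i) => //; rewrite psiR_off ?E.
- apply: fm_vpack => v; rewrite vpack_vflip hfb vpack_mtup /= inA_eq.
  case E: (ttau C psi v == i); last by rewrite psiR_off ?E.
  by case: (ar C K v).
- by move: (hfb ord0) => /= ->; rewrite (negbTE (hmo erefl)) ha.
- by move: (hfb ord0) => /= ->; rewrite (negbTE (hmo erefl)) ha.
Qed.

Lemma hdom_phi_action :
  hpack C (fm C (tdom C Xi) (mtup C (ar C (tdom C Xi)) (tsig C Xi) XiR ji
             (pc C GR FR) (fun _ => FR) (tcomp C phi phiR) (idm FR))) =
  hpack C (fm C L (mtup C (ar C L) (tsig C chi) chiR j (pc C ER DR) (pc C GU FU)
             Kphi_U Hphi_U)).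
Proof.
rewrite hpack_fm_fsubst; apply: fm_vpack => u; rewrite vpack_mtup /Hphi_U /Kphi_U.
rewrite !hpack_castHom.
apply: (hdom_blk_phi _ _ (fun h => newB (tn C psi) (negbT h)) (chiR (tsig C chi u))).
- by move=> w; rewrite vpack_vcast vpack_mtup /= /hsig smap_Rank sar_Rank.
- by move=> h; exact: newB_neq_inA.
- by move=> h; rewrite chiR_off.
Qed.

(* Both components are chi at its j-th variable, pre- and postcomposed with
   H(phi), then K(phi) o psi: on the left by sliding, along the dinaturality
   of chi, the factor H(phi) of the component of phi *_i psi; on the right by
   merging, along functoriality, the outer factors of phi *_(j+i) Xi. *)
Lemma components_eq (fL : is_functor C L) (fM : is_functor C M)
    (dchi : dinatural_in C chi j) :
  hpack C (tcomp C LHS A1) = hpack C (tcomp C RHS A2).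
Proof.
pose HphiL := fm C H (mtup C (ar C H) (tsig C psi) psiL i (pc C GL FL) (fun _ => FL)
                (tcomp C phi phiL) (idm FL)).
pose KphiL := fm C K (mtup C (ar C K) (ttau C psi) psiL i (fun _ => FL) (pc C FL GL)
                (idm FL) (tcomp C phi phiL)).
pose psiL_comp := tcomp C psi (subst1 C psiL i FL).
have left_slide : hpack C (tcomp C LHS A1) =
    hpack C (dinat_form C chi j chiL _ _ _ HphiL (comp KphiL psiL_comp)).
  rewrite /= /hcomp_comp !hpack_castHom /hraw.
  apply: (dinat_form_slide_packed C chi j fL fM dchi _ _ _ _ _ _ _ HphiL
            (comp KphiL psiL_comp)).
  by rewrite /= /hcomp_comp hpack_castHom /hraw comp_assoc /HphiL /KphiL /psiL_comp.
have right_merge : hpack C (tcomp C RHS A2) =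
    hpack C (dinat_form C chi j chiR _ _ _ Hphi_U (comp Kphi_U (tcomp C psi psiR))).
  rewrite /= /hcomp_comp !hpack_castHom /hraw.
  apply: (dinat_form_merge_packed C chi j fL fM).
  - exact: hcod_phi_action.
  - by rewrite /= /hcomp_comp hpack_castHom /hraw.
  - exact: hdom_phi_action.
rewrite left_slide right_merge; apply: dinat_form_congr; first exact: chi_vars_off.
- rewrite /Hphi_U hpack_castHom; apply: fm_vpack => u; rewrite !vpack_mtup.
  case E: (tsig C psi u == i); last by rewrite psi_vars_off ?E.
  by case: (ar C H u); rewrite ?F_vars_eq //; exact: hpack_tcomp phi_vars_eq.
- apply: hpack_comp; first by apply: hpack_tcomp; exact: psi_vars_eq.
  rewrite /Kphi_U hpack_castHom; apply: fm_vpack => u; rewrite !vpack_mtup.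
  case E: (ttau C psi u == i); last by rewrite psi_vars_off ?E.
  by case: (ar C K u); rewrite ?F_vars_eq //; exact: hpack_tcomp phi_vars_eq.
Qed.

End Components.

Theorem mainTheorem14 (C : category) (phi psi chi : trans C)
    (i : 'I_(tn C psi)) (j : 'I_(tn C chi)) :
  is_functor C (tdom C phi) -> is_functor C (tcod C phi) ->
  is_functor C (tdom C psi) -> is_functor C (tcod C psi) ->
  is_functor C (tdom C chi) -> is_functor C (tcod C chi) ->
  dinatural C phi -> dinatural C psi -> dinatural C chi ->
  hcomp C (hcomp C phi psi i) chi j = hcomp C phi (hcomp C psi chi j) (inA j i).
Proof.
move=> _ _ _ _ fL fM _ _ dchi.
apply: trans_ext.
- exact: hsubst_assoc.
- exact: hsubst_assoc.
-
  by rewrite /=; have := ltn_ord i; lia.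
- exact: hmap_assoc.
- exact: hmap_assoc.
- by move=> A1 A2 hA; exact: components_eq fL fM (dchi j).
Qed.
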